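(* Assume $2^{\aleph_0}=\aleph_1$ (so that $\omega_1^{<\omega_1}=\omega_1$). Let $G$ be a closed $\omega_1$-Baire subgroup of $S_{\omega_1}$. Then there is a good quantifier $Q_G$ of type $\langle 2\rangle$ on $\omega_1$ with $\mathrm{Aut}(Q_G)=G$.
   Context: $S_{\omega_1}$ is the group of permutations of $\omega_1$ with the subspace topology from $\omega_1^{\omega_1}$, where basic open sets are given by countable partial functions. $2^{\omega_1\times\omega_1}$ has basic open sets $\{f:s\subseteq f\}$ for countable partial functions $s$. A subspace is $\omega_1$-Baire if the intersection of any $\omega_1$ many open dense subsets of it is dense in it. A quantifier of type $\langle 2\rangle$ on $\omega_1$ is a family $Q$ of subsets of $\omega_1\times\omega_1$, i.e. $Q\subseteq2^{\omega_1\times\omega_1}$; it is downwards closed if closed under subsets. For a map $p$ and $A\subseteq\omega_1^2$, $p(A)=\{(p(a),p(b)):(a,b)\in A\}$. A function $p:\beta\to\omega_1$ with $\beta<\omega_1$ is compatible with $Q$ if for every $A\subseteq\beta\times\beta$, $A\in Q\iff p(A)\in Q$. A permutation $f$ of $\omega_1$ fixes $Q$ if $A\in Q\iff f(A)\in Q$ for all $A\subseteq\omega_1^2$; $\mathrm{Aut}(Q)$ is the group of such permutations. $Q$ is good if it is closed, downwards closed, and every injection $p:\beta\to\omega_1$ with $\beta<\omega_1$ compatible with $Q$ extends to a permutation of $\omega_1$ fixing $Q$. *)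

(* omega_1 is modelled abstractly as a type W with a strict
   well-order lt that is uncountable and all of whose proper initial segments
   are countable; any such (W, lt) is order-isomorphic to omega_1. *)
From Stdlib Require Import Classical.

Section Defs.
Context {W : Type} (lt : W -> W -> Prop).

Definition countable {T : Type} (D : T -> Prop) : Prop :=
  exists g : T -> nat, forall a b, D a -> D b -> g a = g b -> a = b.

Definition is_omega1 : Prop :=
  (forall x, ~ lt x x) /\
  (forall x y z, lt x y -> lt y z -> lt x z) /\
  (forall x y, lt x y \/ x = y \/ lt y x) /\
  well_founded lt /\
  ~ countable (fun _ : W => True) /\
  (forall x, countable (fun y => lt y x)).

End Defs.

Definition bijective {W : Type} (f : W -> W) : Prop :=
  (forall x y, f x = f y -> x = y) /\ (forall y, exists x, f x = y).

Definition agree_on {W : Type} (D : W -> Prop) (f g : W -> W) : Prop :=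
  forall x, D x -> f x = g x.

Definition subgroup {W : Type} (G : (W -> W) -> Prop) : Prop :=
  (forall f, G f -> bijective f) /\
  G (fun x => x) /\
  (forall f g, G f -> G g -> G (fun x => f (g x))) /\
  (forall f, G f -> exists g, G g /\ forall x, g (f x) = x /\ f (g x) = x).

(* G is closed in S_W (basic opens given by countable partial functions) *)
Definition closed_in_Sym {W : Type} (G : (W -> W) -> Prop) : Prop :=
  forall f, bijective f -> ~ G f ->
    exists D : W -> Prop, countable D /\
      forall g, bijective g -> agree_on D g f -> ~ G g.

Definition open_in {W : Type} (G U : (W -> W) -> Prop) : Prop :=
  (forall f, U f -> G f) /\
  (forall f, U f -> exists D : W -> Prop, countable D /\
     forall g, G g -> agree_on D g f -> U g).

Definition dense_in {W : Type} (G V : (W -> W) -> Prop) : Prop :=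
  forall f, G f -> forall D : W -> Prop, countable D ->
    exists g, G g /\ V g /\ agree_on D g f.

Definition omega1_Baire {W : Type} (G : (W -> W) -> Prop) : Prop :=
  forall U : W -> (W -> W) -> Prop,
    (forall i, open_in G (U i) /\ dense_in G (U i)) ->
    dense_in G (fun f => forall i, U i f).

Definition rel (W : Type) := W -> W -> Prop.
Definition quant (W : Type) := rel W -> Prop.

Definition img {W : Type} (p : W -> W) (A : rel W) : rel W :=
  fun a b => exists x y, A x y /\ a = p x /\ b = p y.

Definition Q_closed {W : Type} (Q : quant W) : Prop :=
  forall A, ~ Q A ->
    exists D : W * W -> Prop, countable D /\
      forall B, (forall x y, D (x, y) -> (A x y <-> B x y)) -> ~ Q B.

Definition Q_down_closed {W : Type} (Q : quant W) : Prop :=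
  forall A B, Q A -> (forall x y, B x y -> A x y) -> Q B.

Definition fixes {W : Type} (f : W -> W) (Q : quant W) : Prop :=
  forall A, Q A <-> Q (img f A).

(* p : beta -> W, given as a function on W whose values on {x | x < beta}
   matter; it is compatible with Q *)
Definition compatible {W : Type} (lt : W -> W -> Prop) (beta : W)
    (p : W -> W) (Q : quant W) : Prop :=
  forall A : rel W, (forall a b, A a b -> lt a beta /\ lt b beta) ->
    (Q A <-> Q (img p A)).

Definition good {W : Type} (lt : W -> W -> Prop) (Q : quant W) : Prop :=
  Q_closed Q /\ Q_down_closed Q /\
  forall (beta : W) (p : W -> W),
    (forall x y, lt x beta -> lt y beta -> p x = p y -> x = y) ->
    compatible lt beta p Q ->
    exists f, bijective f /\ (forall x, lt x beta -> f x = p x) /\ fixes f Q.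

From Stdlib Require Import Classical ClassicalEpsilon Arith Lia Cantor.

(* Let R relate 0 to itself, each finite ordinal n to n+1, and each infinite x to the
   finite ordinals in a set [label x] of naturals that codes the order type of x through an
   enumeration of its predecessors.  Labels of distinct ordinals are incomparable, so by
   induction every injection of an initial segment into W that preserves R is the identity.
   Put A in Q_G iff every initial segment of A is contained in g[R] for some g in G.  Then
   Q_G is closed, downward closed and G-invariant.  If p is compatible with Q_G, then
   p[R restricted to beta] lies in some g[R] with g in G, and rigidity of R forces p = g on
   beta.  If f fixes Q_G, then f[R] is in Q_G, so on every countable set f agrees with some
   element of G, and f is in G because G is closed. *)

Definition enum {T : Type} {D : T -> Prop} (H : countable D) : T -> nat :=
  proj1_sig (constructive_indefinite_description _ H).

Lemma enum_inj {T : Type} (D : T -> Prop) (H : countable D) a b :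
  D a -> D b -> enum H a = enum H b -> a = b.
Proof.
  unfold enum. destruct (constructive_indefinite_description _ H) as [g Hg]. exact (Hg a b).
Qed.

Lemma countable_sub {T : Type} (D D' : T -> Prop) :
  countable D -> (forall x, D' x -> D x) -> countable D'.
Proof. intros [g Hg] H. exists g. auto. Qed.

Lemma countable_image {T U : Type} (D : T -> Prop) (f : T -> U) :
  countable D -> countable (fun w => exists x, D x /\ f x = w).
Proof.
  intros [g Hg].
  exists (fun w => match excluded_middle_informative (exists x, D x /\ f x = w) with
           | left e => g (proj1_sig (constructive_indefinite_description _ e))
           | right _ => 0 end).
  intros a b Ha Hb.
  destruct (excluded_middle_informative _) as [ea|]; [|contradiction].
  destruct (excluded_middle_informative _) as [eb|]; [|contradiction].
  destruct (constructive_indefinite_description _ ea) as [xa [Da <-]].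
  destruct (constructive_indefinite_description _ eb) as [xb [Db <-]].
  simpl. intro E. f_equal. auto.
Qed.

Lemma bijective_inverse {T : Type} (g : T -> T) :
  bijective g -> exists gi : T -> T, forall x, gi (g x) = x /\ g (gi x) = x.
Proof.
  intros [Hinj Hsur]. destruct (choice _ Hsur) as [gi Hgi].
  exists gi. intro x. split; auto.
Qed.

(* Encoding P together with its complement makes inclusion of codes force equality. *)
Definition parity_code (P : nat -> Prop) (n : nat) : Prop :=
  exists m, (n = 2 * m /\ P m) \/ (n = 2 * m + 1 /\ ~ P m).

Lemma parity_code_incl (P P' : nat -> Prop) :
  (forall n, parity_code P n -> parity_code P' n) -> forall m, P m <-> P' m.
Proof.
  intros H m. destruct (classic (P m)) as [Pm|Pm].
  - destruct (H (2 * m)) as [m' [[e P'm]|[e _]]]; [exists m; auto| |lia].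
    assert (m' = m) by lia; subst m'; tauto.
  - destruct (H (2 * m + 1)) as [m' [[e _]|[e P'm]]]; [exists m; auto|lia|].
    assert (m' = m) by lia; subst m'; tauto.
Qed.

Section Omega1.
Variable W : Type.
Variable lt : W -> W -> Prop.
Hypothesis Hw1 : is_omega1 lt.

Lemma ord_irrefl x : ~ lt x x. Proof. apply Hw1. Qed.
Lemma ord_trans x y z : lt x y -> lt y z -> lt x z. Proof. apply Hw1. Qed.
Lemma ord_total x y : lt x y \/ x = y \/ lt y x. Proof. apply Hw1. Qed.
Lemma ord_wf : well_founded lt. Proof. apply Hw1. Qed.
Lemma ord_uncountable : ~ countable (fun _ : W => True). Proof. apply Hw1. Qed.
Lemma countable_below x : countable (fun y => lt y x). Proof. apply Hw1. Qed.

Definition segment_enum (x : W) : W -> nat := enum (countable_below x).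

Lemma segment_enum_inj x a b :
  lt a x -> lt b x -> segment_enum x a = segment_enum x b -> a = b.
Proof. exact (enum_inj _ (countable_below x) a b). Qed.

Lemma countable_below_eq x : countable (fun y => lt y x \/ y = x).
Proof.
  exists (fun y => if excluded_middle_informative (y = x) then 0 else S (segment_enum x y)).
  intros a b Ha Hb.
  destruct (excluded_middle_informative (a = x)), (excluded_middle_informative (b = x));
    try congruence.
  intro E; injection E. apply segment_enum_inj; tauto.
Qed.

(* A countable union of countable initial segments cannot exhaust W. *)
Lemma countable_bounded (D : W -> Prop) : countable D -> exists b, forall x, D x -> lt x b.
Proof.
  intros [g Hg]. apply NNPP; intro Hunb.
  assert (Hcof : forall w, exists d, D d /\ (lt w d \/ w = d)).
  { intro w. apply NNPP; intro H1. apply Hunb. exists w. intros x Dx.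
    destruct (ord_total x w) as [h|[h|h]]; auto; exfalso; apply H1; exists x; auto. }
  destruct (choice _ Hcof) as [d Hd].
  apply ord_uncountable.
  exists (fun w => Cantor.to_nat (g (d w), enum (countable_below_eq (d w)) w)).
  intros a b _ _ E.
  apply (f_equal Cantor.of_nat) in E. rewrite !Cantor.cancel_of_to in E.
  injection E as Ed Ea.
  assert (d a = d b) as Eab by (apply Hg; auto; apply Hd).
  rewrite Eab in Ea. apply enum_inj in Ea; auto.
  - destruct (Hd a) as [_ Ha]. rewrite Eab in Ha. destruct Ha; auto.
  - destruct (Hd b) as [_ Hb]. destruct Hb; auto.
Qed.

Lemma image_below_bounded (a : W) (p : W -> W) : exists b, forall x, lt x a -> lt (p x) b.
Proof.
  destruct (countable_bounded _ (countable_image _ p (countable_below a))) as [b Hb].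
  exists b. intros x Hx. apply Hb. eauto.
Qed.

Lemma countable_below_pairs a : countable (fun p : W * W => lt (fst p) a /\ lt (snd p) a).
Proof.
  exists (fun p => Cantor.to_nat (segment_enum a (fst p), segment_enum a (snd p))).
  intros [x y] [x' y'] [H1 H2] [H3 H4] E. cbn [fst snd] in *.
  apply (f_equal Cantor.of_nat) in E. rewrite !Cantor.cancel_of_to in E.
  injection E as Ex Ey. f_equal; apply segment_enum_inj with a; auto.
Qed.

Lemma least_exists (P : W -> Prop) :
  (exists x, P x) -> exists m, P m /\ forall y, P y -> ~ lt y m.
Proof.
  intros [x Hx]. apply NNPP; intro Hno.
  enough (Hnone : forall z, ~ P z) by exact (Hnone x Hx).
  intro z. induction z as [z IH] using (well_founded_induction ord_wf). intro Pz.
  apply Hno. exists z. split; auto. intros y Py Hy. exact (IH y Hy Py).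
Qed.

Definition least (P : W -> Prop) (H : exists x, P x) : W :=
  proj1_sig (constructive_indefinite_description _ (least_exists P H)).

Lemma least_spec P H : P (least P H) /\ forall y, P y -> ~ lt y (least P H).
Proof. unfold least. destruct (constructive_indefinite_description _ _) as [m Hm]. exact Hm. Qed.

Lemma ord_inhabited : exists w : W, True.
Proof.
  apply NNPP; intro H. apply ord_uncountable. exists (fun _ => 0).
  intros a. elim H. exists a. exact I.
Qed.

Lemma ord_no_max x : exists y, lt x y.
Proof.
  apply NNPP; intro H. apply ord_uncountable.
  apply countable_sub with (fun y => lt y x \/ y = x); [apply countable_below_eq|].
  intros y _. destruct (ord_total y x) as [h|[h|h]]; auto. exfalso; eauto.
Qed.

Definition ord_succ (x : W) : W := least (lt x) (ord_no_max x).

Lemma ord_succ_gt x : lt x (ord_succ x).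
Proof. apply (least_spec (lt x) (ord_no_max x)). Qed.

Lemma ord_succ_least x y : lt x y -> ~ lt y (ord_succ x).
Proof. apply (least_spec (lt x) (ord_no_max x)). Qed.

Fixpoint fin (n : nat) : W :=
  match n with
  | 0 => least (fun _ => True) ord_inhabited
  | S n => ord_succ (fin n)
  end.

Lemma fin_lt m n : m < n -> lt (fin m) (fin n).
Proof.
  induction n as [|n IH]; intro Hmn; [lia|]. simpl.
  destruct (Nat.eq_dec m n) as [->|Hne]; [apply ord_succ_gt|].
  eapply ord_trans; [apply IH; lia | apply ord_succ_gt].
Qed.

Lemma fin_inj m n : fin m = fin n -> m = n.
Proof.
  intros E. destruct (lt_eq_lt_dec m n) as [[h|h]|h]; auto;
    apply fin_lt in h; rewrite E in h; exfalso; eapply ord_irrefl; eauto.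
Qed.

Lemma below_fin n y : lt y (fin n) -> exists m, y = fin m.
Proof.
  induction n as [|n IH]; simpl; intro Hy.
  - exfalso. exact (proj2 (least_spec _ ord_inhabited) y I Hy).
  - destruct (ord_total y (fin n)) as [h|[h|h]]; eauto.
    exfalso. eapply ord_succ_least; eauto.
Qed.

Definition infinite (x : W) : Prop := forall n, x <> fin n.

Lemma infinite_above_fin x n : infinite x -> lt (fin n) x.
Proof.
  intros Hx. destruct (ord_total x (fin n)) as [h|[h|h]]; auto.
  - destruct (below_fin _ _ h) as [m ->]. exfalso; eapply Hx; eauto.
  - exfalso; eapply Hx; eauto.
Qed.

Definition order_code (x : W) (i j : nat) : Prop :=
  exists a b, (lt a b \/ a = b) /\ lt b x /\ segment_enum x a = i /\ segment_enum x b = j.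

(* A code inclusion yields an order-preserving map from [z] into [x < z]; evaluated at [x]
   it would send [x] below itself. *)
Lemma order_code_incl_not_lt x z :
  lt x z -> (forall i j, order_code z i j -> order_code x i j) -> False.
Proof.
  intros Hxz Hincl.
  pose (corr a a' := lt a z /\ lt a' x /\ segment_enum x a' = segment_enum z a).
  assert (Hex : forall a, lt a z -> exists a', corr a a').
  { intros a Ha.
    destruct (Hincl (segment_enum z a) (segment_enum z a)) as [a' [b' [Hab [Hb [Ea _]]]]].
    { exists a, a; auto. }
    exists a'. split; [auto|split; auto]. destruct Hab as [h| ->]; eauto using ord_trans. }
  assert (Hmono : forall a b a' b', lt a b -> corr a a' -> corr b b' -> lt a' b').
  { intros a b a' b' Hab [Ha [Ha' Ea]] [Hb [Hb' Eb]].
    destruct (Hincl (segment_enum z a) (segment_enum z b))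
      as [a'' [b'' [Hle [Hb'' [Ea'' Eb'']]]]].
    { exists a, b; auto. }
    assert (Ha'' : lt a'' x) by (destruct Hle as [h| ->]; eauto using ord_trans).
    assert (a'' = a') by (apply segment_enum_inj with x; congruence).
    assert (b'' = b') by (apply segment_enum_inj with x; congruence).
    subst a'' b''. destruct Hle as [h| ->]; auto.
    assert (a = b) by (apply segment_enum_inj with z; congruence). subst b.
    exfalso; eapply ord_irrefl; eauto. }
  assert (Hnodec : forall a, lt a z -> forall a', corr a a' -> ~ lt a' a).
  { intro a. induction a as [a IH] using (well_founded_induction ord_wf).
    intros Ha a' Hc Hlt.
    assert (Ha'z : lt a' z) by eauto using ord_trans.
    destruct (Hex a' Ha'z) as [a'' Hc'].
    exact (IH a' Hlt Ha'z a'' Hc' (Hmono a' a a'' a' Hlt Hc' Hc)). }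
  destruct (Hex x Hxz) as [x' Hc].
  exact (Hnodec x Hxz x' Hc (proj1 (proj2 Hc))).
Qed.

Lemma order_code_inj x z : (forall i j, order_code x i j <-> order_code z i j) -> x = z.
Proof.
  intros H. destruct (ord_total x z) as [h|[h|h]]; auto; exfalso.
  - apply (order_code_incl_not_lt x z h). intros i j; apply H.
  - apply (order_code_incl_not_lt z x h). intros i j; apply H.
Qed.

Definition label (x : W) : nat -> Prop :=
  parity_code (fun m => order_code x (fst (Cantor.of_nat m)) (snd (Cantor.of_nat m))).

Lemma label_incl_eq x z : (forall n, label x n -> label z n) -> x = z.
Proof.
  intro H. apply order_code_inj. intros i j.
  pose proof (parity_code_incl _ _ H (Cantor.to_nat (i, j))) as Hij.
  cbv beta in Hij. rewrite Cantor.cancel_of_to in Hij. exact Hij.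
Qed.

Definition rigid_rel (x y : W) : Prop :=
  (x = fin 0 /\ y = fin 0) \/
  (exists n, x = fin n /\ y = fin (S n)) \/
  (infinite x /\ exists k, y = fin k /\ label x k).

Lemma rigid_rel_loop y : rigid_rel y y -> y = fin 0.
Proof.
  intros [[-> _]|[[n [-> E]]|[Iy [k [E _]]]]]; auto.
  - apply fin_inj in E; lia.
  - exfalso; exact (Iy k E).
Qed.

Lemma rigid_rel_fin n w : rigid_rel (fin n) w -> w = fin 0 \/ w = fin (S n).
Proof.
  intros [[_ ->]|[[m [E ->]]|[Ifin _]]]; auto.
  - apply fin_inj in E; subst; auto.
  - exfalso; exact (Ifin n eq_refl).
Qed.

Lemma rigid_rel_infinite y w : infinite y -> rigid_rel y w -> exists k, w = fin k /\ label y k.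
Proof.
  intros Iy [[E _]|[[n [E _]]|[_ Hk]]]; auto; exfalso; eapply Iy; eauto.
Qed.

Section Rigidity.
Variables (beta : W) (h : W -> W).
Hypothesis h_inj : forall x y, lt x beta -> lt y beta -> h x = h y -> x = y.
Hypothesis h_hom :
  forall x y, lt x beta -> lt y beta -> rigid_rel x y -> rigid_rel (h x) (h y).

Lemma rigid_rel_fixed_step x : lt x beta -> (forall y, lt y x -> h y = y) -> h x = x.
Proof.
  intros Hx IH.
  assert (Hnot_below : ~ lt (h x) x).
  { intro L. assert (h (h x) = h x) by auto.
    assert (h x = x) as E by (apply h_inj; eauto using ord_trans).
    rewrite E in L. exact (ord_irrefl x L). }
  destruct (classic (infinite x)) as [Ix|Fx].
  - assert (Ihx : infinite (h x)).
    { intros n En. rewrite En in Hnot_below.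
      destruct (ord_total x (fin n)) as [L|[E|L]].
      + destruct (below_fin _ _ L) as [m Em]. exact (Ix m Em).
      + exact (Ix n E).
      + exact (Hnot_below L). }
    symmetry. apply label_incl_eq. intros k Hk.
    assert (Hkx : lt (fin k) x) by (apply infinite_above_fin; auto).
    assert (Hrel : rigid_rel x (fin k)) by (right; right; eauto).
    apply h_hom in Hrel; eauto using ord_trans. rewrite (IH _ Hkx) in Hrel.
    destruct (rigid_rel_infinite _ _ Ihx Hrel) as [k' [E Hk']].
    apply fin_inj in E. subst; auto.
  - apply not_all_not_ex in Fx. destruct Fx as [[|n] ->].
    + apply rigid_rel_loop, h_hom; auto. left; auto.
    + assert (Hn : lt (fin n) (fin (S n))) by (apply fin_lt; lia).
      assert (Hrel : rigid_rel (fin n) (fin (S n))) by (right; left; eauto).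
      apply h_hom in Hrel; eauto using ord_trans. rewrite (IH _ Hn) in Hrel.
      destruct (rigid_rel_fin _ _ Hrel) as [E|E]; auto.
      exfalso. apply Hnot_below. rewrite E. apply fin_lt; lia.
Qed.

Lemma rigid_rel_rigid x : lt x beta -> h x = x.
Proof.
  induction x as [x IH] using (well_founded_induction ord_wf). intro Hx.
  apply rigid_rel_fixed_step; auto. intros y Hy. apply IH; eauto using ord_trans.
Qed.

End Rigidity.

Lemma img_rigid_rel_agree (beta : W) (p g : W -> W) :
  bijective g ->
  (forall x y, lt x beta -> lt y beta -> p x = p y -> x = y) ->
  (forall x y, lt x beta -> lt y beta -> rigid_rel x y -> img g rigid_rel (p x) (p y)) ->
  forall x, lt x beta -> p x = g x.
Proof.
  intros Bg Hinj Hp. destruct (bijective_inverse g Bg) as [gi Hgi].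
  assert (Hfix : forall x, lt x beta -> gi (p x) = x).
  { apply rigid_rel_rigid.
    - intros x y Hx Hy E. apply Hinj; auto.
      rewrite <- (proj2 (Hgi (p x))), <- (proj2 (Hgi (p y))), E. reflexivity.
    - intros x y Hx Hy Rxy. destruct (Hp x y Hx Hy Rxy) as [u [v [Ruv [-> ->]]]].
      rewrite !(proj1 (Hgi _)). exact Ruv. }
  intros x Hx. rewrite <- (Hfix x Hx) at 2. symmetry; apply Hgi.
Qed.

Section Quantifier.
Variable G : (W -> W) -> Prop.
Hypothesis HG : subgroup G.
Hypothesis HGc : closed_in_Sym G.

Definition QG : quant W := fun A => forall a, exists g, G g /\
  forall x y, A x y -> lt x a -> lt y a -> img g rigid_rel x y.

Lemma QG_down_closed : Q_down_closed QG.
Proof.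
  intros A B HA HB a. destruct (HA a) as [g [Gg Hg]]. exists g; split; auto.
Qed.

Lemma QG_closed : Q_closed QG.
Proof.
  intros A nA. apply not_all_ex_not in nA. destruct nA as [a Ha].
  exists (fun p => lt (fst p) a /\ lt (snd p) a). split; [apply countable_below_pairs|].
  intros B HB QB. apply Ha. destruct (QB a) as [g [Gg Hg]]. exists g; split; auto.
  intros x y Axy Hx Hy. apply Hg; auto. apply (HB x y); auto.
Qed.

Lemma QG_rigid_rel : QG rigid_rel.
Proof.
  intros a. exists (fun x => x). split; [apply HG|]. intros x y Rxy _ _. exists x, y; auto.
Qed.

Lemma QG_img f A : G f -> QG A -> QG (img f A).
Proof.
  intros Gf QA a. destruct HG as [_ [_ [Hcomp Hinv]]].
  destruct (Hinv f Gf) as [fi [Gfi Hfi]].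
  destruct (image_below_bounded a fi) as [b Hb].
  destruct (QA b) as [g [Gg Hg]].
  exists (fun x => f (g x)). split; [apply Hcomp; auto|].
  intros x y [u [v [Auv [-> ->]]]] Hx Hy.
  assert (Hu : lt u b) by (rewrite <- (proj1 (Hfi u)); auto).
  assert (Hv : lt v b) by (rewrite <- (proj1 (Hfi v)); auto).
  destruct (Hg u v Auv Hu Hv) as [u' [v' [R' [-> ->]]]].
  exists u', v'; auto.
Qed.

Lemma G_fixes_QG f : G f -> fixes f QG.
Proof.
  intros Gf A. split; [apply QG_img; auto|]. intros QfA.
  destruct HG as [_ [_ [_ Hinv]]]. destruct (Hinv f Gf) as [fi [Gfi Hfi]].
  apply QG_down_closed with (img fi (img f A)); [apply QG_img; auto|].
  intros x y Axy. exists (f x), (f y). split; [exists x, y; auto|split; symmetry; apply Hfi].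
Qed.

Lemma fixes_QG_G f : bijective f -> fixes f QG -> G f.
Proof.
  intros Bf Ff. apply NNPP; intro nG.
  destruct (HGc f Bf nG) as [D [cD HD]].
  destruct (countable_bounded D cD) as [b Hb].
  destruct (image_below_bounded b f) as [a Ha].
  destruct (proj1 (Ff rigid_rel) QG_rigid_rel a) as [g [Gg Hg]].
  assert (Bg : bijective g) by (apply HG; auto).
  apply (HD g Bg); [|exact Gg].
  intros x Dx. symmetry. apply (img_rigid_rel_agree b f g Bg); auto.
  - intros; apply Bf; auto.
  - intros x0 y0 Hx0 Hy0 R0. apply Hg; auto. exists x0, y0; auto.
Qed.

Lemma QG_good : good lt QG.
Proof.
  split; [apply QG_closed|split; [apply QG_down_closed|]].
  intros beta p Hinj Hcomp.
  pose (A x y := rigid_rel x y /\ lt x beta /\ lt y beta).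
  assert (QpA : QG (img p A)).
  { assert (HA : forall x y, A x y -> lt x beta /\ lt y beta) by (intros x y [_ H]; exact H).
    apply (proj1 (Hcomp A HA)).
    apply QG_down_closed with rigid_rel; [apply QG_rigid_rel|]. intros x y [H _]; exact H. }
  destruct (image_below_bounded beta p) as [a Ha].
  destruct (QpA a) as [g [Gg Hg]].
  assert (Bg : bijective g) by (apply HG; auto).
  exists g. split; [exact Bg|split; [|apply G_fixes_QG; exact Gg]].
  intros x Hx. symmetry. apply (img_rigid_rel_agree beta p g Bg Hinj); auto.
  intros x0 y0 Hx0 Hy0 R0. apply Hg; auto. exists x0, y0. unfold A; auto.
Qed.

End Quantifier.

End Omega1.

Theorem proposition26 (W : Type) (lt : W -> W -> Prop)
  (Hw1 : is_omega1 lt)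
  (CH : exists i : (nat -> bool) -> W, forall r s, i r = i s -> r = s)
  (G : (W -> W) -> Prop)
  (HG : subgroup G) (HGc : closed_in_Sym G) (HGb : omega1_Baire G) :
  exists Q : quant W, good lt Q /\
    forall f, bijective f -> (fixes f Q <-> G f).
Proof.
  exists (QG W lt Hw1 G). split.
  - apply QG_good; auto.
  - intros f Bf. split.
    + apply fixes_QG_G; auto.
    + apply G_fixes_QG; auto.
Qed.
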